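(* For every integer $k\ge0$ and every real $x\in[0,1]$, $$\log_2(1+kx)\ge\log_2(1+k)\cdot\log_2(1+x).$$ *)

From Stdlib Require Import Reals.
Open Scope R_scope.

Definition log2 (y : R) : R := ln y / ln 2.

From Stdlib Require Import Reals Lra.
From Coquelicot Require Import Coquelicot.
Open Scope R_scope.

(* With a = log2 (1 + k), the function y |-> ln (1 + k y) - a ln (1 + y)
   vanishes at 0 and at 1.  Its derivative has the sign of an affine function
   of slope k (1 - a) <= 0, so it first increases and then decreases on
   [0, 1], and therefore stays above its endpoint value 0. *)

Lemma derive_nonneg_le (f f' : R -> R) (a b : R) :
  a <= b ->
  (forall c, a <= c <= b -> derivable_pt_lim f c (f' c)) ->
  (forall c, a <= c <= b -> 0 <= f' c) ->
  f a <= f b.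
Proof.
  intros hab hder hsign.
  destruct (Req_dec a b) as [<- | hne]; [lra |].
  destruct (MVT_cor2 f f' a b) as [c [hmvt hc]]; [lra | exact hder |].
  assert (0 <= f' c) by (apply hsign; lra).
  nra.
Qed.

Lemma derive_nonpos_ge (f f' : R -> R) (a b : R) :
  a <= b ->
  (forall c, a <= c <= b -> derivable_pt_lim f c (f' c)) ->
  (forall c, a <= c <= b -> f' c <= 0) ->
  f b <= f a.
Proof.
  intros hab hder hsign.
  enough (- f a <= - f b) by lra.
  apply (derive_nonneg_le (- f)%F (fun c => - f' c) a b hab).
  - intros c hc. apply derivable_pt_lim_opp, hder, hc.
  - intros c hc. specialize (hsign c hc). lra.
Qed.

Lemma Rmin_le_of_derive_sign_change (f f' : R -> R) (a b x : R) :
  a <= x <= b ->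
  (forall c, a <= c <= b -> derivable_pt_lim f c (f' c)) ->
  (forall c, a <= c <= x -> 0 <= f' c) \/ (forall c, x <= c <= b -> f' c <= 0) ->
  Rmin (f a) (f b) <= f x.
Proof.
  intros hx hder [hinc | hdec].
  - apply (Rle_trans _ (f a)); [apply Rmin_l |].
    apply (derive_nonneg_le f f'); [lra | | exact hinc].
    intros c hc. apply hder. lra.
  - apply (Rle_trans _ (f b)); [apply Rmin_r |].
    apply (derive_nonpos_ge f f'); [lra | | exact hdec].
    intros c hc. apply hder. lra.
Qed.

Lemma ln_2_pos : 0 < ln 2.
Proof. rewrite <- ln_1. apply ln_increasing; lra. Qed.

Lemma log2_ge_1 (y : R) : 2 <= y -> 1 <= log2 y.
Proof.
  intros hy. unfold log2.
  apply (Rmult_le_reg_r (ln 2)); [exact ln_2_pos |].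
  field_simplify; [| pose proof ln_2_pos; lra].
  destruct (Req_dec y 2) as [-> | hne]; [lra |].
  left. apply ln_increasing; lra.
Qed.

Lemma derive_ln_one_add_mul (k c : R) :
  0 <= k -> 0 <= c ->
  derivable_pt_lim (fun y => ln (1 + k * y)) c (k / (1 + k * c)).
Proof.
  intros hk hc. apply is_derive_Reals.
  auto_derive; [nra | field; nra].
Qed.

Lemma log2_mul_ln_le (k x : R) :
  1 <= k -> 0 <= x <= 1 ->
  log2 (1 + k) * ln (1 + x) <= ln (1 + k * x).
Proof.
  intros hk hx.
  set (a := log2 (1 + k)).
  assert (ha : 1 <= a) by (apply log2_ge_1; lra).
  set (phi := fun y => ln (1 + k * y) - a * ln (1 + y)).
  set (numer := fun c => (k - a) + c * (k * (1 - a))).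
  set (phi' := fun c => numer c / ((1 + k * c) * (1 + c))).
  assert (hder : forall c, 0 <= c <= 1 -> derivable_pt_lim phi c (phi' c)).
  { intros c hc.
    replace (phi' c) with (k / (1 + k * c) - a * (1 / (1 + 1 * c)))
      by (unfold phi', numer; field; nra).
    apply derivable_pt_lim_minus; [apply derive_ln_one_add_mul; lra |].
    apply derivable_pt_lim_scal.
    apply (derivable_pt_lim_ext (fun y => ln (1 + 1 * y))).
    + intros y. now rewrite Rmult_1_l.
    + apply derive_ln_one_add_mul; lra. }
  assert (hslope : k * (1 - a) <= 0) by nra.
  assert (hsign : (forall c, 0 <= c <= x -> 0 <= phi' c) \/
                  (forall c, x <= c <= 1 -> phi' c <= 0)).
  { destruct (Rle_lt_dec 0 (numer x)) as [hpos | hneg]; [left | right];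
      intros c hc; unfold phi'.
    - assert (0 <= numer c).
      { unfold numer in *. pose proof (Rmult_le_compat_neg_l _ _ _ hslope (proj2 hc)). nra. }
      apply Rmult_le_pos; [lra |]. left. apply Rinv_0_lt_compat. nra.
    - assert (numer c < 0).
      { unfold numer in *. pose proof (Rmult_le_compat_neg_l _ _ _ hslope (proj1 hc)). nra. }
      left. apply Rdiv_neg_pos; [lra | nra]. }
  assert (hphi0 : phi 0 = 0).
  { unfold phi. rewrite Rmult_0_r, Rplus_0_r, ln_1. ring. }
  assert (hphi1 : phi 1 = 0).
  { unfold phi, a, log2. rewrite Rmult_1_r.
    replace (1 + 1) with 2 by ring.
    field. pose proof ln_2_pos. lra. }
  pose proof (Rmin_le_of_derive_sign_change phi phi' 0 1 x hx hder hsign) as hmin.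
  rewrite hphi0, hphi1, Rmin_left in hmin by lra.
  unfold phi in hmin; cbv beta in hmin. lra.
Qed.

Theorem mainTheorem11 (k : nat) (x : R) (hx0 : 0 <= x) (hx1 : x <= 1) :
  log2 (1 + INR k * x) >= log2 (1 + INR k) * log2 (1 + x).
Proof.
  apply Rle_ge.
  destruct k as [| k].
  - change (INR 0) with 0. rewrite Rmult_0_l, Rplus_0_r. unfold log2, Rdiv.
    rewrite ln_1, !Rmult_0_l. lra.
  - assert (hk : 1 <= INR (S k)) by (rewrite S_INR; pose proof (pos_INR k); lra).
    unfold log2 at 2 3. unfold Rdiv. rewrite <- Rmult_assoc.
    apply Rmult_le_compat_r.
    + left. apply Rinv_0_lt_compat, ln_2_pos.
    + apply log2_mul_ln_le; lra.
Qed.
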